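(* Let $M\in S_d^+$, let $z,v\in\mathbb R^d\setminus\{0\}$ and $\theta_0\in[0,\pi/2]$ be such that $\langle v,z-v\rangle_M\ge\cos(\theta_0)\|v\|_M\|z-v\|_M$. Then $$\|z-v\|_M\le\|z\|_M-\frac{\langle z,v\rangle_M}{\|z\|_M}+\frac{(\sin\theta_0)^2\|v\|_M^2}{\|z\|_M}.$$
   Context: $S_d^+$ is the set of $d\times d$ symmetric positive definite matrices; $\langle u,v\rangle_M:=u^TMv$, $\|u\|_M:=\sqrt{\langle u,u\rangle_M}$. *)

From HB Require Import structures.
From mathcomp Require Import all_boot all_order all_algebra.
From mathcomp Require Import all_classical all_reals all_analysis.
Set Implicit Arguments. Unset Strict Implicit. Unset Printing Implicit Defensive.
Import Order.TTheory GRing.Theory Num.Theory.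
Local Open Scope ring_scope.

Definition ipM (R : realType) (d : nat) (M : 'M[R]_d) (u v : 'cV[R]_d) : R :=
  (u^T *m M *m v) ord0 ord0.

Definition normM (R : realType) (d : nat) (M : 'M[R]_d) (u : 'cV[R]_d) : R :=
  Num.sqrt (ipM M u u).

Definition spd (R : realType) (d : nat) (M : 'M[R]_d) : Prop :=
  M^T = M /\ forall x : 'cV[R]_d, x != 0 -> 0 < ipM M x x.

From HB Require Import structures.
From mathcomp Require Import all_boot all_order all_algebra.
From mathcomp Require Import all_classical all_reals all_analysis.
From mathcomp Require Import ring lra.
Import Order.TTheory GRing.Theory Num.Theory.
Local Open Scope ring_scope.

(* Write a = ||v||, b = ||z - v||, c = ||z||, P = <v, z - v> and k, s for the
   cosine and sine of theta0, so that c^2 = a^2 + 2P + b^2 and k a b <= P.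
   Clearing the denominator c, the claim becomes b c <= b^2 + P + s^2 a^2.
   Squaring, and using a^2 b^2 = k^2 a^2 b^2 + s^2 a^2 b^2, it reduces to
   k^2 a^2 b^2 <= P^2 <= (P + s^2 a^2)^2, which holds as 0 <= k a b <= P. *)

Section InnerProduct.
Context {R : realType} {d : nat} (M : 'M[R]_d).

Lemma ipMDl u w x : ipM M (u + w) x = ipM M u x + ipM M w x.
Proof. by rewrite /ipM linearD /= !mulmxDl mxE. Qed.

Lemma ipMDr u w x : ipM M x (u + w) = ipM M x u + ipM M x w.
Proof. by rewrite /ipM mulmxDr mxE. Qed.

Lemma ipMC u w : M^T = M -> ipM M u w = ipM M w u.
Proof.
move=> symM; rewrite /ipM.
transitivity ((w^T *m M *m u)^T ord0 ord0); last by rewrite mxE.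
by rewrite !trmx_mul symM trmxK mulmxA.
Qed.

Lemma ipMxx_ge0 u : spd M -> 0 <= ipM M u u.
Proof.
move=> [_ posM]; have [->|u_neq0] := eqVneq u 0; last exact/ltW/posM.
by rewrite /ipM mulmx0 mxE.
Qed.

Lemma normM_ge0 u : 0 <= normM M u.
Proof. exact: sqrtr_ge0. Qed.

Lemma sqr_normM u : spd M -> normM M u ^+ 2 = ipM M u u.
Proof. by move=> spdM; rewrite sqr_sqrtr // ipMxx_ge0. Qed.

End InnerProduct.

Section TriangleSideBound.
Context {R : realFieldType} {a b c P k s : R}.
Hypotheses (a_ge0 : 0 <= a) (b_ge0 : 0 <= b) (c_gt0 : 0 < c) (k_ge0 : 0 <= k).
Hypotheses (cos2Dsin2_ks : k ^+ 2 + s ^+ 2 = 1) (kab_le_P : k * a * b <= P).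
Hypothesis sqr_c : c ^+ 2 = a ^+ 2 + 2 * P + b ^+ 2.

Lemma triangle_side_mul_le : b * c <= b ^+ 2 + P + s ^+ 2 * a ^+ 2.
Proof.
have kab_ge0 : 0 <= k * a * b by rewrite !mulr_ge0.
have P_ge0 : 0 <= P := le_trans kab_ge0 kab_le_P.
have sa_ge0 : 0 <= s ^+ 2 * a ^+ 2 by rewrite mulr_ge0 ?sqr_ge0.
have bc_ge0 : 0 <= b * c by rewrite mulr_ge0 // ltW.
have rhs_ge0 : 0 <= b ^+ 2 + P + s ^+ 2 * a ^+ 2 by rewrite !addr_ge0 ?sqr_ge0.
rewrite -ler_sqr ?nnegrE //.
have sqr_kab : k ^+ 2 * (a ^+ 2 * b ^+ 2) <= P ^+ 2.
  by rewrite mulrA -!exprMn ler_sqr.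
have sqr_P : P ^+ 2 <= (P + s ^+ 2 * a ^+ 2) ^+ 2.
  by rewrite ler_sqr ?nnegrE ?addr_ge0 // lerDl.
have sab_ge0 : 0 <= s ^+ 2 * (a ^+ 2 * b ^+ 2) by rewrite -exprMn mulr_ge0 ?sqr_ge0.
rewrite -subr_ge0 exprMn sqr_c.
have -> : (b ^+ 2 + P + s ^+ 2 * a ^+ 2) ^+ 2 - b ^+ 2 * (a ^+ 2 + 2 * P + b ^+ 2)
          = ((P + s ^+ 2 * a ^+ 2) ^+ 2 - k ^+ 2 * (a ^+ 2 * b ^+ 2))
            + s ^+ 2 * (a ^+ 2 * b ^+ 2) - (1 - (k ^+ 2 + s ^+ 2)) * (a ^+ 2 * b ^+ 2).
  by ring.
rewrite cos2Dsin2_ks subrr mul0r subr0 addr_ge0 // subr_ge0.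
exact: le_trans sqr_P.
Qed.

Lemma triangle_side_bound : b <= c - (P + a ^+ 2) / c + s ^+ 2 * a ^+ 2 / c.
Proof.
have -> : c - (P + a ^+ 2) / c + s ^+ 2 * a ^+ 2 / c
          = (c ^+ 2 - P - a ^+ 2 + s ^+ 2 * a ^+ 2) / c.
  by field; rewrite gt_eqF.
rewrite ler_pdivlMr // sqr_c.
have := triangle_side_mul_le; lra.
Qed.

End TriangleSideBound.

Theorem lemma1p7 (R : realType) (d : nat) (M : 'M[R]_d) (z v : 'cV[R]_d)
  (theta0 : R) :
  spd M -> z != 0 -> v != 0 ->
  0 <= theta0 <= pi / 2 ->
  ipM M v (z - v) >= cos theta0 * normM M v * normM M (z - v) ->
  normM M (z - v) <=
    normM M z - ipM M z v / normM M z
    + (sin theta0) ^+ 2 * (normM M v) ^+ 2 / normM M z.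
Proof.
move=> spdM z_neq0 _ /andP[theta0_ge0 theta0_le] angle_vw.
set w := z - v in angle_vw *.
have zE : z = v + w by rewrite /w addrC subrK.
clearbody w; subst z.
have ipM_wv : ipM M w v = ipM M v w := ipMC M w v spdM.1.
have ipM_zv : ipM M (v + w) v = ipM M v w + normM M v ^+ 2.
  by rewrite sqr_normM // ipMDl ipM_wv addrC.
have norm_vw_gt0 : 0 < normM M (v + w) by rewrite sqrtr_gt0; apply: spdM.2.
have cos_ge0 : 0 <= cos theta0.
  by apply: cos_ge0_pihalf; rewrite theta0_le andbT; lra.
have sqr_norm_vw : normM M (v + w) ^+ 2
    = normM M v ^+ 2 + 2 * ipM M v w + normM M w ^+ 2.
  by rewrite !sqr_normM // !ipMDl !ipMDr ipM_wv; ring.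
rewrite ipM_zv.
exact: (triangle_side_bound (normM_ge0 M v) (normM_ge0 M w) norm_vw_gt0 cos_ge0
          (cos2Dsin2 theta0) angle_vw sqr_norm_vw).
Qed.
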